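(* For all integers $m\ge1$, $r\ge0$ and $n\ge0$, $$\mathcal D_{m,r}(n,x)=\frac1{n+1}\sum_{k=0}^n\sum_{l=0}^{n-k}\sum_{s=0}^l\binom{n+1}{l+1}\binom{l+1}{s+1}W_{m,r}(n-l,k)\,m^{l-s}\,T^{[m]}_{s+1}(1)\,\mathcal B_{l-s}\,\mathcal B_k(x).$$
   Context: The Bernoulli polynomials are defined by $\sum_{n\ge0}\mathcal B_n(x)\frac{t^n}{n!}=\frac{te^{xt}}{e^t-1}$ and $\mathcal B_n:=\mathcal B_n(0)$. For integers $m\ge1$, $n,k,r\ge0$, $W_{m,r}(n,k)$ denotes the $r$-Whitney number of the second kind, defined by $\sum_{n\ge k}W_{m,r}(n,k)\frac{z^n}{n!}=\frac{e^{rz}}{k!}\left(\frac{e^{mz}-1}{m}\right)^k$; the $r$-Dowling polynomial is $\mathcal D_{m,r}(n,u):=\sum_{k=0}^nW_{m,r}(n,k)u^k$; and the $[m]$-Touchard polynomials are $T^{[m]}_n(x):=\sum_{k=0}^n W_{m,0}(n,k)x^k$. *)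

From HB Require Import structures.
From mathcomp Require Import all_boot all_order all_algebra.
Set Implicit Arguments. Unset Strict Implicit. Unset Printing Implicit Defensive.
Import Order.TTheory GRing.Theory Num.Theory.
Local Open Scope ring_scope.

(* Bernoulli numbers B_0..B_n from t/(e^t-1) = sum B_n t^n/n!, i.e. the coefficient
   recurrence of  (e^t - 1) * B(t) = t :  B_0 = 1, sum_{j<=n} C(n+1,j) B_j = 0 (n>=1). *)
Fixpoint bern_list (n : nat) : seq rat :=
  match n with
  | 0 => [:: 1]
  | n'.+1 => let s := bern_list n' in
      rcons s (- (n'.+2)%:R^-1 * \sum_(j < n'.+1) ('C(n'.+2, j))%:R * nth 0 s j)
  end.

Definition bern (n : nat) : rat := nth 0 (bern_list n) n.

(* Bernoulli polynomial: t e^{xt}/(e^t-1) = sum B_n(x) t^n/n!, so B_n(x) = sum_k C(n,k) B_k x^{n-k}. *)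
Definition bernpoly (n : nat) : {poly rat} :=
  \sum_(k < n.+1) (('C(n, k))%:R * bern k) *: 'X^(n - k).

(* r-Whitney numbers of the second kind: coefficient of z^n/n! in
   e^{rz}/k! ((e^{mz}-1)/m)^k, i.e.
   W_{m,r}(n,k) = 1/(m^k k!) sum_{j=0}^k (-1)^{k-j} C(k,j) (mj+r)^n. *)
Definition whitney (m r n k : nat) : rat :=
  ((m%:R ^+ k) * (k`!)%:R)^-1 *
  \sum_(j < k.+1) ((-1) ^+ (k - j) * ('C(k, j))%:R * ((m * j + r)%N%:R) ^+ n).

Definition dowling (m r n : nat) : {poly rat} :=
  \sum_(k < n.+1) whitney m r n k *: 'X^k.

Definition touchard (m n : nat) : {poly rat} :=
  \sum_(k < n.+1) whitney m 0 n k *: 'X^k.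

From HB Require Import structures.
From mathcomp Require Import all_boot all_order all_algebra.
From mathcomp Require Import ring.
Set Implicit Arguments. Unset Strict Implicit. Unset Printing Implicit Defensive.
Import Order.TTheory GRing.Theory Num.Theory.
Local Open Scope ring_scope.

(* Power series are modelled by polynomials truncated with [take_poly N], and
   [ecoef p n] reads off the coefficient of [t^n/n!].  With [u = (e^(m t) - 1)/m],
   [e^(r t) u^k / k!] generates [W_{m,r}(., k)], so [e^(r t) e^(x u)] generates
   [D_{m,r}(., x)].  Writing [t = (m t / (e^(m t) - 1)) u] and
   [u e^(x u) = (e^u - 1) (u e^(x u) / (e^u - 1))] gives
     [t e^(r t) e^(x u) = (m t / (e^(m t) - 1)) (e^u - 1) * e^(r t) sum_k B_k(x) u^k / k!],
   where [e^u - 1] generates [T_n(1)] for [n >= 1].  Comparing the coefficients of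
   [t^(n+1)/(n+1)!] yields the identity. *)

Section TakePoly.
Variable R : comNzRingType.
Implicit Types p q w : {poly R}.

Lemma take_polyMl N p q : take_poly N (take_poly N p * q) = take_poly N (p * q).
Proof.
apply/polyP => i; rewrite !coef_take_poly; case: ifP => // ltiN.
rewrite !coefM; apply: eq_bigr => -[j /= ltji] _.
by rewrite coef_take_poly (leq_ltn_trans _ ltiN).
Qed.

Lemma take_polyMr N p q : take_poly N (p * take_poly N q) = take_poly N (p * q).
Proof. by rewrite mulrC take_polyMl mulrC. Qed.

Lemma take_polyX N p k : take_poly N (take_poly N p ^+ k) = take_poly N (p ^+ k).
Proof.
elim: k => // k IHk.
by rewrite !exprS -take_polyMr IHk take_polyMr take_polyMl.
Qed.

(* Only the coefficients of [p] below [N] reach degree [< N] in [p \Po 'X * w]. *)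
Lemma take_poly_comp N p w :
  take_poly N (take_poly N p \Po ('X * w)) = take_poly N (p \Po ('X * w)).
Proof.
rewrite -[in RHS](poly_take_drop N p) comp_polyD take_polyD comp_polyM comp_Xn_poly.
by rewrite exprMn mulrA mulrAC take_polyMXn_0 addr0.
Qed.

End TakePoly.

Lemma sum_triangle (V : nmodType) n (F : nat -> nat -> V) :
  \sum_(l < n.+1) \sum_(k < (n - l).+1) F l k =
  \sum_(k < n.+1) \sum_(l < (n - k).+1) F l k.
Proof.
have widen (i : 'I_n.+1) (G : nat -> V) :
    \sum_(j < (n - i).+1) G j = \sum_(j < n.+1) if (i + j <= n)%N then G j else 0.
  rewrite (big_ord_widen n.+1 G) ?ltnS ?leq_subr // big_mkcond.
  by apply: eq_bigr => j _; rewrite ltnS leq_subRL // -ltnS.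
under eq_bigr => l _ do rewrite (widen l (F l)).
under [RHS]eq_bigr => k _ do rewrite (widen k (F^~ k)).
by rewrite exchange_big; apply: eq_bigr => k _; apply: eq_bigr => l _; rewrite addnC.
Qed.

Lemma poly_eq_horner (R : numDomainType) (p q : {poly R}) :
  (forall x, p.[x] = q.[x]) -> p = q.
Proof.
move=> pq; apply/eqP; rewrite -subr_eq0; apply/eqP.
apply: (@roots_geq_poly_eq0 _ _ [seq i%:R | i <- iota 0 (size (p - q))]).
- by apply/allP => _ /mapP[i _ ->]; rewrite rootE hornerD hornerN pq subrr.
- by rewrite map_inj_uniq ?iota_uniq // => i j /eqP; rewrite eqr_nat => /eqP.
- by rewrite size_map size_iota.
Qed.

Lemma fact_neq0 n : n`!%:R != 0 :> rat.
Proof. by rewrite pnatr_eq0 -lt0n fact_gt0. Qed.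

Definition ecoef (p : {poly rat}) n := n`!%:R * p`_n.

Definition egf N (a : nat -> rat) : {poly rat} := \poly_(i < N) (a i / i`!%:R).

Lemma take_poly_egf N a : take_poly N (egf N a) = egf N a.
Proof. exact/take_poly_id/size_poly. Qed.

Lemma ecoef_egf N a i : (i < N)%N -> ecoef (egf N a) i = a i.
Proof. by move=> ltiN; rewrite /ecoef coef_poly ltiN mulrC divfK ?fact_neq0. Qed.

Lemma ecoefZ a p i : ecoef (a *: p) i = a * ecoef p i.
Proof. by rewrite /ecoef coefZ mulrCA. Qed.

Lemma ecoefMn p n i : ecoef (p *+ n) i = ecoef p i *+ n.
Proof. by rewrite /ecoef coefMn mulrnAr. Qed.

Lemma ecoef_sum I (s : seq I) (F : I -> {poly rat}) i :
  ecoef (\sum_(j <- s) F j) i = \sum_(j <- s) ecoef (F j) i.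
Proof. by rewrite /ecoef coef_sum mulr_sumr. Qed.

Lemma ecoef_take_poly N p i : (i < N)%N -> ecoef (take_poly N p) i = ecoef p i.
Proof. by rewrite /ecoef coef_take_poly => ->. Qed.

Lemma take_poly_eq_egf N p a :
  (forall i, (i < N)%N -> ecoef p i = a i) -> take_poly N p = egf N a.
Proof.
move=> pa; apply/polyP => i; rewrite coef_take_poly coef_poly; case: ifP => // /pa <-.
by rewrite /ecoef (mulrC i`!%:R) mulfK ?fact_neq0.
Qed.

Lemma take_poly_ecoef N p q :
  (forall i, (i < N)%N -> ecoef p i = ecoef q i) -> take_poly N p = take_poly N q.
Proof.
move=> pq; apply/polyP => i; rewrite !coef_take_poly; case: ifP => // /pq.
exact/mulfI/fact_neq0.
Qed.

Lemma ecoefM p q n :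
  ecoef (p * q) n = \sum_(j < n.+1) 'C(n, j)%:R * ecoef p j * ecoef q (n - j).
Proof.
rewrite /ecoef coefM mulr_sumr; apply: eq_bigr => -[j /= ltjn] _.
by rewrite -(bin_fact (ltjn : (j <= n)%N)) !natrM; ring.
Qed.

Lemma ecoefXM p n : ecoef ('X * p) n.+1 = n.+1%:R * ecoef p n.
Proof. by rewrite /ecoef coefXM /= factS natrM mulrA. Qed.

Lemma size_bern_list n : size (bern_list n) = n.+1.
Proof. by elim: n => //= n IHn; rewrite size_rcons IHn. Qed.

Lemma nth_bern_list n j : (j <= n)%N -> nth 0 (bern_list n) j = bern j.
Proof.
elim: n j => [|n IHn] j; first by rewrite leqn0 => /eqP ->.
rewrite leq_eqVlt => /orP [/eqP -> //| ltjn].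
by rewrite /= nth_rcons size_bern_list ltjn IHn.
Qed.

Lemma bern_rec n : \sum_(j < n.+2) 'C(n.+2, j)%:R * bern j = 0.
Proof.
rewrite big_ord_recr /=.
have -> : bern n.+1 = - n.+2%:R^-1 * \sum_(j < n.+1) 'C(n.+2, j)%:R * bern j.
  rewrite /bern /= nth_rcons size_bern_list ltnn eqxx; congr (_ * _).
  by apply: eq_bigr => -[j ltjn] _; rewrite nth_bern_list.
by rewrite binSn mulrA mulrN mulfV ?pnatr_eq0 // mulN1r subrr.
Qed.

Definition expt N (c : rat) := egf N (fun i => c ^+ i).

(* [(e^(c t) - 1) / c], with the factor [t] made explicit. *)
Definition expm1c N (c : rat) : {poly rat} := 'X * \poly_(i < N) (c ^+ i / i.+1`!%:R).

Lemma expt_mulD N a b : take_poly N (expt N a * expt N b) = expt N (a + b).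
Proof.
apply: take_poly_eq_egf => i ltiN; rewrite ecoefM addrC exprDn.
apply: eq_bigr => -[j /= ltji] _.
rewrite !ecoef_egf ?(leq_ltn_trans (leq_subr j i) ltiN) ?(leq_ltn_trans _ ltiN) //.
by rewrite -mulr_natl; ring.
Qed.

Lemma expt0 N : expt N 0 = take_poly N 1.
Proof.
symmetry; apply: take_poly_eq_egf => i _; rewrite /ecoef coef1 expr0n.
by case: i => [|i]; rewrite ?mulr1 ?mulr0.
Qed.

Lemma expt_expr N a j : take_poly N (expt N a ^+ j) = expt N (a *+ j).
Proof.
elim: j => [|j IHj]; first by rewrite expt0.
by rewrite exprS mulrS -take_polyMr IHj expt_mulD.
Qed.

Lemma expm1c_expt N c : take_poly N (c *: expm1c N c + 1) = expt N c.
Proof.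
apply/polyP => i; rewrite coef_take_poly coefD coefZ coefXM coef1 !coef_poly.
case: ifP => // ltiN; case: i ltiN => [|i] ltiN /=.
  by rewrite mulr0 add0r expr0 divr1.
by rewrite (ltn_trans (ltnSn i) ltiN) addr0 exprS mulrA.
Qed.

Lemma expm1c_exprZ N c k :
  take_poly N (c ^+ k *: expm1c N c ^+ k) = take_poly N ((expt N c - 1) ^+ k).
Proof.
rewrite -exprZn -take_polyX -[in RHS]take_polyX; congr (take_poly N (_ ^+ k)).
by rewrite -[c *: _](addrK 1) [LHS]take_polyD expm1c_expt [RHS]take_polyD take_poly_egf.
Qed.

Lemma ecoef_expt_expm1_expr N a c k i : (i < N)%N ->
  ecoef (expt N a * (expt N c - 1) ^+ k) i =
  \sum_(j < k.+1) (-1) ^+ (k - j) * 'C(k, j)%:R * (a + c *+ j) ^+ i.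
Proof.
move=> ltiN; rewrite addrC exprDn mulr_sumr ecoef_sum; apply: eq_bigr => j _.
have -> : (-1) ^+ (k - j) * expt N c ^+ j = (-1) ^+ (k - j) *: expt N c ^+ j.
  by rewrite -mul_polyC rmorphXn rmorphN1.
rewrite [expt N a * _]mulrnAr ecoefMn -scalerAr ecoefZ.
rewrite -(ecoef_take_poly _ ltiN) -take_polyMr expt_expr expt_mulD ecoef_egf //.
by rewrite -mulr_natr mulrAC.
Qed.

Lemma ecoef_whitney N m r k i : (0 < m)%N -> (i < N)%N ->
  ecoef (expt N r%:R * expm1c N m%:R ^+ k) i = k`!%:R * whitney m r i k.
Proof.
move=> m_gt0 ltiN; set c : rat := m%:R.
have ck_neq0 : c ^+ k != 0 by rewrite expf_neq0 // pnatr_eq0 -lt0n.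
have -> : expt N r%:R * expm1c N c ^+ k =
          (c ^+ k)^-1 *: (expt N r%:R * (c ^+ k *: expm1c N c ^+ k)).
  by rewrite -scalerAr scalerA mulVf // scale1r.
rewrite ecoefZ -(ecoef_take_poly _ ltiN) -take_polyMr expm1c_exprZ take_polyMr.
rewrite ecoef_take_poly // ecoef_expt_expm1_expr // /whitney invfM.
rewrite [RHS]mulrA [k`!%:R * _]mulrCA mulfV ?fact_neq0 // mulr1; congr (_ * _).
by apply: eq_bigr => j _; rewrite -[c *+ _]mulr_natr natrD natrM addrC.
Qed.

Lemma whitney_eq0 m r i k : (0 < m)%N -> (i < k)%N -> whitney m r i k = 0.
Proof.
move=> m_gt0 ltik; have := ecoef_whitney r k m_gt0 (ltnSn i).
rewrite /ecoef /expm1c exprMn mulrCA coefXnM ltik mulr0 => /esym/eqP.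
by rewrite mulf_eq0 (negbTE (fact_neq0 k)) => /eqP.
Qed.

Lemma whitney_S0 m n : whitney m 0 n.+1 0 = 0.
Proof. by rewrite /whitney big_ord1 muln0 expr0n !mulr0. Qed.

Lemma dowling_horner m r n x :
  (dowling m r n).[x] = \sum_(k < n.+1) x ^+ k * whitney m r n k.
Proof.
by rewrite horner_sum; apply: eq_bigr => k _; rewrite hornerZ hornerXn mulrC.
Qed.

Lemma touchard_dowling m n : touchard m n = dowling m 0 n.
Proof. by []. Qed.

(* Truncations of [c t / (e^(c t) - 1)], [t e^(x t) / (e^t - 1)] and [e^t - 1]. *)
Definition bernt N c := egf N (fun i => bern i * c ^+ i).
Definition bernpolyt N x := egf N (fun k => (bernpoly k).[x]).
Definition expm1t N := egf N (fun i => (i != 0)%:R).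

Lemma ecoef_expm1c0 N c : ecoef (expm1c N c) 0 = 0.
Proof. by rewrite /ecoef coefXM mulr0. Qed.

Lemma ecoef_expm1cS N c i : (i < N)%N -> ecoef (expm1c N c) i.+1 = c ^+ i.
Proof.
by move=> ltiN; rewrite /ecoef coefXM coef_poly ltiN mulrC divfK ?fact_neq0.
Qed.

(* This is the defining recurrence of [bern]. *)
Lemma bernt_expm1c N c : take_poly N (bernt N c * expm1c N c) = take_poly N 'X.
Proof.
apply: take_poly_ecoef => -[|i] ltiN.
  by rewrite ecoefM big_ord1 ecoef_expm1c0 /ecoef coefX !mulr0.
rewrite ecoefM big_ord_recr /= subnn ecoef_expm1c0 mulr0 addr0.
have ltiN' : (i < N)%N by exact: ltn_trans ltiN.
transitivity (c ^+ i * \sum_(j < i.+1) 'C(i.+1, j)%:R * bern j).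
  rewrite mulr_sumr; apply: eq_bigr => -[j /=]; rewrite ltnS => leji _.
  have ltjN : (j < N)%N by exact: leq_ltn_trans leji ltiN'.
  have ltijN : (i - j < N)%N by exact: leq_ltn_trans (leq_subr j i) ltiN'.
  have -> : c ^+ i = c ^+ j * c ^+ (i - j) by rewrite -exprD subnKC.
  by rewrite subSn // ecoef_expm1cS // ecoef_egf //; ring.
rewrite /ecoef coefX; case: i {ltiN ltiN'} => [|i].
  by rewrite big_ord1 /bern /= !mulr1.
by rewrite bern_rec !mulr0.
Qed.

Lemma bernpolyt_bernt N x : bernpolyt N x = take_poly N (bernt N 1 * expt N x).
Proof.
symmetry; apply: take_poly_eq_egf => i ltiN; rewrite ecoefM horner_sum.
apply: eq_bigr => -[j /=]; rewrite ltnS => leji _.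
have ltjN : (j < N)%N by exact: leq_ltn_trans leji ltiN.
have ltijN : (i - j < N)%N by exact: leq_ltn_trans (leq_subr j i) ltiN.
by rewrite !ecoef_egf // hornerZ hornerXn expr1n mulr1.
Qed.

Lemma expm1t_expm1c N : expm1t N = take_poly N (expm1c N 1).
Proof.
symmetry; apply: take_poly_eq_egf => -[|i] ltiN; first exact: ecoef_expm1c0.
by rewrite ecoef_expm1cS ?expr1n // (ltn_trans (ltnSn i)).
Qed.

Lemma expm1t_bernpolyt N x :
  take_poly N (expm1t N * bernpolyt N x) = take_poly N ('X * expt N x).
Proof.
rewrite expm1t_expm1c bernpolyt_bernt take_polyMl take_polyMr mulrCA mulrA.
by rewrite -take_polyMl bernt_expm1c take_polyMl.
Qed.

Lemma egf_comp N a q : egf N a \Po q = \sum_(k < N) (a k / k`!%:R) *: q ^+ k.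
Proof.
by rewrite /egf poly_def linear_sum; apply: eq_bigr => k _; rewrite linearZ /= comp_Xn_poly.
Qed.

Lemma ecoef_expt_comp_egf N m r a j : (0 < m)%N -> (j < N)%N ->
  ecoef (expt N r%:R * (egf N a \Po expm1c N m%:R)) j =
  \sum_(k < j.+1) a k * whitney m r j k.
Proof.
move=> m_gt0 ltjN; rewrite egf_comp mulr_sumr ecoef_sum.
rewrite (big_ord_widen N (fun k => a k * whitney m r j k) ltjN) [RHS]big_mkcond.
apply: eq_bigr => k _; rewrite -scalerAr ecoefZ ecoef_whitney //.
rewrite mulrA divfK ?fact_neq0 //.
by case: ltnP => // ltjk; rewrite whitney_eq0 ?mulr0.
Qed.

Lemma dowling_egf_bernoulli N c a x : let u := expm1c N c in
  take_poly N ('X * (expt N a * (expt N x \Po u))) =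
  take_poly N ((bernt N c * (expm1t N \Po u)) * (expt N a * (bernpolyt N x \Po u))).
Proof.
move=> u.
have comp_u : take_poly N ((expm1t N * bernpolyt N x) \Po u) =
              take_poly N (u * (expt N x \Po u)).
  by rewrite -take_poly_comp expm1t_bernpolyt take_poly_comp comp_polyM comp_polyX.
rewrite -take_polyMl -(bernt_expm1c N c) take_polyMl.
have -> : bernt N c * (expm1t N \Po u) * (expt N a * (bernpolyt N x \Po u)) =
          bernt N c * expt N a * ((expm1t N \Po u) * (bernpolyt N x \Po u)) by ring.
by rewrite -comp_polyM -[RHS]take_polyMr comp_u take_polyMr /u; congr take_poly; ring.
Qed.

Lemma ecoef_expm1t_comp N m j : (0 < m)%N -> (j < N)%N ->
  ecoef (expm1t N \Po expm1c N m%:R) j = \sum_(k < j.+1) (k != 0)%:R * whitney m 0 j k.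
Proof.
move=> m_gt0 ltjN; rewrite -(ecoef_take_poly _ ltjN) -[expm1t N \Po _]mul1r -take_polyMl.
by rewrite -expt0 -[expt N 0]/(expt N 0%:R) ecoef_take_poly // ecoef_expt_comp_egf.
Qed.

Lemma ecoef_expm1t_comp0 N m : (0 < m)%N -> (0 < N)%N ->
  ecoef (expm1t N \Po expm1c N m%:R) 0 = 0.
Proof. by move=> m_gt0 N_gt0; rewrite ecoef_expm1t_comp // big_ord1 mul0r. Qed.

Lemma ecoef_expm1t_compS N m s : (0 < m)%N -> (s.+1 < N)%N ->
  ecoef (expm1t N \Po expm1c N m%:R) s.+1 = (touchard m s.+1).[1].
Proof.
move=> m_gt0 ltsN; rewrite ecoef_expm1t_comp // touchard_dowling dowling_horner.
rewrite big_ord_recl [RHS]big_ord_recl whitney_S0 !mulr0 !add0r.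
by apply: eq_bigr => k _; rewrite expr1n.
Qed.

Lemma ecoef_bernt_expm1t_comp0 N m : (0 < m)%N -> (0 < N)%N ->
  ecoef (bernt N m%:R * (expm1t N \Po expm1c N m%:R)) 0 = 0.
Proof. by move=> m_gt0 N_gt0; rewrite ecoefM big_ord1 ecoef_expm1t_comp0 ?mulr0. Qed.

Definition bern_touchard_conv m l :=
  \sum_(s < l.+1) 'C(l.+1, s.+1)%:R * m%:R ^+ (l - s) * (touchard m s.+1).[1] * bern (l - s).

Lemma ecoef_bernt_expm1t_compS N m l : (0 < m)%N -> (l.+1 < N)%N ->
  ecoef (bernt N m%:R * (expm1t N \Po expm1c N m%:R)) l.+1 = bern_touchard_conv m l.
Proof.
move=> m_gt0 ltlN; have N_gt0 := ltn_trans (ltn0Sn l) ltlN.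
rewrite ecoefM big_ord_recr /= subnn ecoef_expm1t_comp0 ?mulr0 ?addr0 //.
rewrite /bern_touchard_conv (reindex_inj rev_ord_inj).
apply: eq_bigr => -[s /=]; rewrite ltnS => lesl _.
have ltsN : (s.+1 < N)%N by exact: leq_ltn_trans ltlN.
have ltlsN : (l - s < N)%N by exact: leq_ltn_trans (leq_subr s l) (ltnW ltlN).
rewrite subSS subSn ?leq_subr // subKn // ecoef_expm1t_compS // ecoef_egf //.
by rewrite -subSS bin_sub //; ring.
Qed.

Lemma dowling_horner_bernoulli m r n x : (0 < m)%N ->
  n.+1%:R * (dowling m r n).[x] =
  \sum_(l < n.+1) 'C(n.+1, l.+1)%:R * bern_touchard_conv m l *
    \sum_(k < (n - l).+1) (bernpoly k).[x] * whitney m r (n - l) k.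
Proof.
move=> m_gt0; have := congr1 (ecoef^~ n.+1) (dowling_egf_bernoulli n.+2 m%:R r%:R x).
rewrite /= !ecoef_take_poly // ecoefXM ecoef_expt_comp_egf // -dowling_horner => ->.
rewrite ecoefM big_ord_recl ecoef_bernt_expm1t_comp0 // mulr0 mul0r add0r.
apply: eq_bigr => -[l /=]; rewrite ltnS => leln _.
rewrite /bump /= ecoef_bernt_expm1t_compS // subSS ecoef_expt_comp_egf //.
exact: leq_ltn_trans (leq_subr l n) (leqnSn n.+1).
Qed.

Theorem mainTheorem16 (m r n : nat) (hm : (1 <= m)%N) :
  dowling m r n =
  (n.+1%:R)^-1 *:
    \sum_(k < n.+1) \sum_(l < (n - k).+1) \sum_(s < l.+1)
      ((('C(n.+1, l.+1))%:R * ('C(l.+1, s.+1))%:R * whitney m r (n - l) k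
        * m%:R ^+ (l - s) * (touchard m s.+1).[1] * bern (l - s)) *: bernpoly k).
Proof.
apply: poly_eq_horner => x; rewrite hornerZ.
have n1_neq0 : n.+1%:R != 0 :> rat by rewrite pnatr_eq0.
apply: (mulfI n1_neq0); rewrite mulrA mulfV // mul1r dowling_horner_bernoulli //.
under eq_bigr => l _ do rewrite mulr_sumr.
rewrite (sum_triangle n (fun l k => 'C(n.+1, l.+1)%:R * bern_touchard_conv m l *
                                    ((bernpoly k).[x] * whitney m r (n - l) k))).
rewrite [RHS]horner_sum; apply: eq_bigr => k _.
rewrite [RHS]horner_sum; apply: eq_bigr => l _.
rewrite [RHS]horner_sum /bern_touchard_conv mulr_sumr mulr_suml; apply: eq_bigr => s _.
by rewrite hornerZ; ring.
Qed.
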